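(* Let $\Gamma$ be an extended Coxeter diagram with all vertex labels $p_i$ finite. If the Shephard group $G_\Gamma$ is finite, then the Hermitian form $H_\Gamma$ is positive definite.
   Context: An extended Coxeter diagram $\Gamma$ is a finite simplicial graph with vertex set $I$, labels $p_i\in\mathbb{Z}_{\ge2}\cup\{\infty\}$ on vertices and $m_{ij}\in\mathbb{Z}_{\ge3}\cup\{\infty\}$ on edges ($m_{ij}=2$ for non-edges, and $p_i=p_j$ whenever $m_{ij}$ is odd). $G_\Gamma=\langle s_i, i\in I\mid \mathrm{prod}(s_i,s_j;m_{ij})=\mathrm{prod}(s_j,s_i;m_{ij}),\ s_i^{p_i}=1\rangle$, with $\mathrm{prod}(a,b;m)$ the alternating word $aba\cdots$ of length $m$ (relations with $\infty$ omitted). For distinct $i,j$ joined by an edge set $\alpha_{ij}=-\left(\frac{\cos(\pi/p_i-\pi/p_j)+\cos(2\pi/m_{ij})}{2\sin(\pi/p_i)\sin(\pi/p_j)}\right)^{1/2}$; set $\alpha_{ii}=1$ and $\alpha_{ij}=0$ if $i\ne j$ are not joined by an edge. $H_\Gamma$ is the Hermitian form on $\mathbb{C}^I$ with basis $\{e_i\}$ given by $H_\Gamma(e_i,e_j)=\alpha_{ij}$. *)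

From HB Require Import structures.
From mathcomp Require Import all_boot all_order all_algebra.
From mathcomp Require Import all_classical all_reals all_analysis.
From mathcomp Require Import complex.
Set Implicit Arguments. Unset Strict Implicit. Unset Printing Implicit Defensive.
Import Order.TTheory GRing.Theory Num.Theory.
Local Open Scope ring_scope.

(* Vertex set I (a finite type); simple graph given by a symmetric
   irreflexive edge relation e; vertex labels p i (all finite, >= 2);
   edge labels m i j : option nat, where None stands for infinity.  *)
Record ext_coxeter_diagram (I : finType) (e : rel I)
    (p : I -> nat) (m : I -> I -> option nat) : Prop := {
  ecd_irrefl : forall i, ~~ e i i;
  ecd_sym : forall i j, e i j = e j i;
  ecd_msym : forall i j, e i j -> m i j = m j i;
  ecd_mge3 : forall i j k, e i j -> m i j = Some k -> (3 <= k)%N;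
  ecd_p : forall i, (2 <= p i)%N;
  ecd_odd : forall i j k, e i j -> m i j = Some k -> odd k -> p i = p j
}.

Definition mlab (I : finType) (e : rel I) (m : I -> I -> option nat) (i j : I)
  : option nat := if e i j then m i j else Some 2%N.

(* Words in the generators: (i, true) = s_i, (i, false) = s_i^-1. *)
Definition letter (I : finType) := (I * bool)%type.
Definition word (I : finType) := seq (letter I).

Definition prodw (I : finType) (i j : I) (k : nat) : word I :=
  mkseq (fun t => if odd t then (j, true) else (i, true)) k.

Inductive shep_basic (I : finType) (e : rel I) (p : I -> nat)
    (m : I -> I -> option nat) : word I -> word I -> Prop :=
| sb_free i b : shep_basic e p m [:: (i, b); (i, ~~ b)] [::]
| sb_pow i : shep_basic e p m (nseq (p i) (i, true)) [::]
| sb_braid i j k : i != j -> mlab e m i j = Some k ->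
    shep_basic e p m (prodw i j k) (prodw j i k).

(* the congruence on words generated by the relations: two words are
   equivalent iff they represent the same element of G_Gamma *)
Inductive shep_eq (I : finType) (e : rel I) (p : I -> nat)
    (m : I -> I -> option nat) : word I -> word I -> Prop :=
| se_refl w : shep_eq e p m w w
| se_sym w1 w2 : shep_eq e p m w1 w2 -> shep_eq e p m w2 w1
| se_trans w1 w2 w3 : shep_eq e p m w1 w2 -> shep_eq e p m w2 w3 ->
    shep_eq e p m w1 w3
| se_ctx u v x y : shep_basic e p m x y ->
    shep_eq e p m (u ++ x ++ v) (u ++ y ++ v).

Definition shephard_finite (I : finType) (e : rel I) (p : I -> nat)
    (m : I -> I -> option nat) : Prop :=
  exists ws : seq (word I), forall w : word I,
    exists2 w', w' \in ws & shep_eq e p m w w'.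

(* cos(2 pi / m), with cos(2 pi / infinity) = cos 0 = 1 *)
Definition cos2pim (R : realType) (k : option nat) : R :=
  match k with Some k => cos (2 * pi / k%:R) | None => 1 end.

Definition alpha (R : realType) (I : finType) (e : rel I) (p : I -> nat)
    (m : I -> I -> option nat) (i j : I) : R :=
  if i == j then 1
  else if e i j then
    - Num.sqrt ((cos (pi / (p i)%:R - pi / (p j)%:R) + @cos2pim R (m i j))
                / (2 * sin (pi / (p i)%:R) * sin (pi / (p j)%:R)))
  else 0.

Definition herm_form (R : realType) (I : finType) (e : rel I) (p : I -> nat)
    (m : I -> I -> option nat) (z : I -> R[i]) : R[i] :=
  \sum_(i : I) \sum_(j : I) (z i)^* * ((@alpha R I e p m i j)%:C)%C * z j.

Definition herm_pos_def (R : realType) (I : finType) (e : rel I)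
    (p : I -> nat) (m : I -> I -> option nat) : Prop :=
  forall z : I -> R[i], (exists i, z i != 0) -> 0 < @herm_form R I e p m z.

(* The generators s_i act on C^I by the complex reflections
   r_i = 1 + (zeta_i - 1) e_i alpha_i, where zeta_i = exp(2 pi i / p_i) and alpha_i
   is the i-th row of the Gram matrix (alpha_ij). Then r_i^(p_i) = 1, and on
   span(e_i, e_j) the braid relation of length m_ij reduces to an identity between
   Lucas sequences, so s_i |-> r_i is a representation of G_Gamma. If G_Gamma is
   finite, averaging the standard Hermitian product over its image gives an
   invariant positive definite form K. As r_i fixes e_j - alpha_ij e_i and acts by
   zeta_i != 1 on e_i, invariance forces K(e_i, e_j) = alpha_ij K(e_i, e_i). Hence
   K(e_i, e_i) is constant along edges, and H_Gamma(z) = K(y, y) > 0 for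
   y_i = z_i / sqrt K(e_i, e_i). *)

From HB Require Import structures.
From mathcomp Require Import all_boot all_order all_algebra.
From mathcomp Require Import all_classical all_reals all_analysis.
From mathcomp Require Import complex.
From mathcomp Require Import ring lra.
Set Implicit Arguments. Unset Strict Implicit. Unset Printing Implicit Defensive.
Import Order.TTheory GRing.Theory Num.Theory.
Local Open Scope complex_scope.
Local Open Scope ring_scope.

Section Expi.
Variable R : realType.

Definition expi (t : R) : R[i] := cos t +i* sin t.

Lemma expiD a b : expi (a + b) = expi a * expi b.
Proof.
rewrite /expi sinD cosD; apply/eqP; rewrite eq_complex /= eqxx /=.
by rewrite addrC.
Qed.

Lemma expiMn t k : expi t ^+ k = expi (t *+ k).
Proof.
elim: k => [|k IH]; first by rewrite expr0 mulr0n /expi cos0 sin0.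
by rewrite exprS IH -expiD mulrS.
Qed.

Lemma expi_2pi : expi (pi *+ 2) = 1.
Proof. by rewrite /expi cos2pi sin2pi. Qed.

Lemma expi_neq0 t : expi t != 0.
Proof.
apply/eqP => -[c0 s0]; have := cos2Dsin2 t.
by rewrite c0 s0 expr0n addr0 => /eqP; rewrite eq_sym oner_eq0.
Qed.

Lemma expi_sqrB1 t : expi t ^+ 2 - 1 = 2%:R * 'i * (sin t)%:C * expi t.
Proof.
have -> : expi t = (cos t)%:C + 'i * (sin t)%:C by rewrite {1}[expi t]complexE.
have i2 : 'i ^+ 2 = -1 :> R[i] := @sqrCi _.
have cs : (cos t)%:C ^+ 2 + (sin t)%:C ^+ 2 = 1 :> R[i].
  by rewrite -!rmorphXn -rmorphD cos2Dsin2.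
move: (cos t)%:C (sin t)%:C cs => c s cs.
apply/eqP; rewrite -subr_eq0; apply/eqP.
transitivity ((c ^+ 2 + s ^+ 2 - 1) - s ^+ 2 * ('i ^+ 2 + 1)); first by ring.
by rewrite cs i2; ring.
Qed.

Lemma expi_sqrD a b :
  expi a ^+ 2 + expi b ^+ 2 = expi a * expi b * (2%:R * cos (a - b))%:C.
Proof.
have expiDN x : expi x + expi (- x) = (2%:R * cos x)%:C.
  rewrite /expi cosN sinN; apply/eqP; rewrite eq_complex /= subrr eqxx andbT.
  by rewrite mulr_natl mulr2n.
rewrite -expiDN mulrDr -!expiD !expr2 -!expiD; congr (expi _ + expi _); lra.
Qed.

Lemma expi_sqr_neq1 t : 0 < sin t -> expi t ^+ 2 != 1.
Proof.
move=> st; rewrite -subr_eq0 expi_sqrB1 !mulf_neq0 ?expi_neq0 ?neq0Ci //.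
by rewrite -(rmorph0 (real_complex R)) (inj_eq (@complexI R)) gt_eqF.
Qed.

(* Where the formula for alpha_ij comes from: it makes the trace of r_i r_j on
   span(e_i, e_j) equal to -2 cos(2 pi / m_ij) times a square root of its determinant. *)
Lemma expi_braid_trace (a b c x : R) :
  x ^+ 2 * (2%:R * sin a * sin b) = cos (a - b) + c ->
  expi a ^+ 2 + expi b ^+ 2 + (expi a ^+ 2 - 1) * (expi b ^+ 2 - 1) * x%:C ^+ 2
  = expi a * expi b * (- (2%:R * c))%:C.
Proof.
move=> hx; rewrite expi_sqrD !expi_sqrB1.
have i2 : 'i ^+ 2 = -1 :> R[i] := @sqrCi _.
transitivity (expi a * expi b * ((2%:R * cos (a - b))%:C
    + 4%:R * 'i ^+ 2 * (sin a)%:C * (sin b)%:C * x%:C ^+ 2)); first by ring.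
rewrite i2; congr (_ * _).
have -> : (2%:R * cos (a - b))%:C + 4%:R * (-1) * (sin a)%:C * (sin b)%:C * x%:C ^+ 2
    = (2%:R * cos (a - b) - 2%:R * (x ^+ 2 * (2%:R * sin a * sin b)))%:C.
  by rewrite rmorphB !rmorphM ?rmorphXn !rmorph_nat; ring.
by rewrite hx; congr (_%:C); ring.
Qed.

End Expi.

Fixpoint lucasU (R : pzRingType) (P Q : R) (n : nat) : R :=
  match n with
  | 0 => 0
  | 1 => 1
  | (n'.+1 as n1).+1 => P * lucasU P Q n1 - Q * lucasU P Q n'
  end.
Arguments lucasU {R} P Q n : simpl nomatch.

Lemma lucasUSS (R : pzRingType) (P Q : R) n :
  lucasU P Q n.+2 = P * lucasU P Q n.+1 - Q * lucasU P Q n.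
Proof. by []. Qed.

Lemma lucasU_scale (R : comPzRingType) (w P : R) s :
  lucasU (w * P) (w ^+ 2) s * w = w ^+ s * lucasU P 1 s.
Proof.
suff [] : lucasU (w * P) (w ^+ 2) s * w = w ^+ s * lucasU P 1 s /\
          lucasU (w * P) (w ^+ 2) s.+1 * w = w ^+ s.+1 * lucasU P 1 s.+1 by [].
elim: s => [|s [IH0 IH1]]; first by rewrite /= mul0r mulr0 expr1 mulr1 mul1r.
split=> //; rewrite !lucasUSS.
transitivity (w * P * (lucasU (w * P) (w ^+ 2) s.+1 * w)
              - w ^+ 2 * (lucasU (w * P) (w ^+ 2) s * w)); first by ring.
by rewrite IH0 IH1 !exprS; ring.
Qed.

Lemma rmorph_lucasU (R S : pzRingType) (f : {rmorphism R -> S}) (P Q : R) s :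
  f (lucasU P Q s) = lucasU (f P) (f Q) s.
Proof.
suff [] : f (lucasU P Q s) = lucasU (f P) (f Q) s /\
          f (lucasU P Q s.+1) = lucasU (f P) (f Q) s.+1 by [].
elim: s => [|s [IH0 IH1]]; first by rewrite rmorph0 rmorph1.
by split=> //; rewrite !lucasUSS rmorphB !rmorphM IH0 IH1.
Qed.

Lemma lucasU_sin (R : realType) (t : R) s :
  sin t * lucasU (- (2%:R * cos t)) 1 s = (-1) ^+ s.+1 * sin (t *+ s).
Proof.
suff [] : sin t * lucasU (- (2%:R * cos t)) 1 s = (-1) ^+ s.+1 * sin (t *+ s) /\
  sin t * lucasU (- (2%:R * cos t)) 1 s.+1 = (-1) ^+ s.+2 * sin (t *+ s.+1) by [].
elim: s => [|s [IH0 IH1]].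
  by rewrite /= mulr0n sin0 !mulr0 mulr1 mulr1n expr2 mulrNN mulr1 mul1r.
split=> //; rewrite lucasUSS mulrBr mulrCA IH1 mul1r IH0.
have -> : sin (t *+ s.+2) = 2%:R * cos t * sin (t *+ s.+1) - sin (t *+ s).
  have -> : t *+ s.+2 = t *+ s.+1 + t by rewrite mulrSr.
  have -> : t *+ s = t *+ s.+1 - t by rewrite mulrSr addrK.
  by rewrite sinD sinB; ring.
by rewrite !exprS; ring.
Qed.

Lemma lucasU_cos_2pi_div (R : realType) (k : nat)
    (P := - (2%:R * cos (2%:R * pi / k%:R)) : R) : (2 < k)%N ->
  if odd k then lucasU P 1 k./2.+1 = lucasU P 1 k./2 else lucasU P 1 k./2 = 0.
Proof.
move=> k_gt2; rewrite {}/P; set t := 2%:R * pi / k%:R.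
have k_gt0 : 0 < k%:R :> R by rewrite ltr0n (ltn_trans _ k_gt2).
have st : sin t != 0.
  have k3 : 3%:R <= k%:R :> R by rewrite ler_nat.
  have := pi_gt0 R => pi_gt0.
  rewrite gt_eqF // sin_gt0_pi // divr_gt0 ?mulr_gt0 ?k_gt0 ?ltr0n //=.
  by rewrite ltr_pdivrMr //; nra.
have tk : t *+ k = pi *+ 2.
  by rewrite /t -mulr_natr -(mulr_natr pi); field; rewrite gt_eqF.
have := odd_double_half k; set b := odd k; set h := k./2; clearbody b h.
case: b; rewrite ?add1n ?add0n => kE; apply: (mulfI st); rewrite !lucasU_sin.
  have -> : t *+ h.+1 = pi *+ 2 - t *+ h.
    by rewrite -tk -kE -addnn -addSn mulrnDr addrK.
  by rewrite sinB sin2pi cos2pi mul0r mul1r sub0r !exprS; ring.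
have -> : t *+ h = pi.
  by move/eqP: tk; rewrite -kE -muln2 mulrnA eqrMn2r /= => /eqP.
by rewrite sinpi !mulr0.
Qed.

Lemma iter_mulmx_comm (R : pzRingType) n (A : 'M[R]_n) k :
  iter k (mulmx A) 1%:M *m A = A *m iter k (mulmx A) 1%:M.
Proof.
elim: k => [|k IH]; first by rewrite /= mul1mx mulmx1.
by rewrite iterS -mulmxA IH.
Qed.

Definition unitv {R : pzRingType} {n} (a : 'I_n) : 'cV[R]_n := delta_mx a 0.

Section Reflection.
Variables (R : comNzRingType) (n : nat) (al : 'I_n -> 'I_n -> R) (ze : 'I_n -> R).
Hypothesis al_diag : forall a, al a a = 1.
Hypothesis al_sym : forall a b, al a b = al b a.

Definition gram : 'M[R]_n := \matrix_(a, b) al a b.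
Definition gcoord a (v : 'cV[R]_n) : R := (gram *m v) a 0.
Definition reflection a : 'M[R]_n := 1%:M + (ze a - 1) *: (unitv a *m row a gram).

Lemma gcoordD a v w : gcoord a (v + w) = gcoord a v + gcoord a w.
Proof. by rewrite /gcoord mulmxDr mxE. Qed.

Lemma gcoordZ a c v : gcoord a (c *: v) = c * gcoord a v.
Proof. by rewrite /gcoord -scalemxAr mxE. Qed.

Lemma gcoord_unitv a b : gcoord a (unitv b) = al a b.
Proof. by rewrite /gcoord /unitv -colE !mxE. Qed.

Lemma reflectionE a v :
  reflection a *m v = v + ((ze a - 1) * gcoord a v) *: unitv a.
Proof.
rewrite mulmxDl mul1mx -scalemxAl -mulmxA -row_mul [row a _]mx11_scalar.
by rewrite mul_mx_scalar scalerA mxE.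
Qed.

Lemma reflection_unitv a : reflection a *m unitv a = ze a *: unitv a.
Proof.
rewrite reflectionE gcoord_unitv al_diag mulr1.
by rewrite -{1}(scale1r (unitv a)) -scalerDl addrC subrK.
Qed.

Lemma iter_reflection a k :
  iter k (mulmx (reflection a)) 1%:M
  = 1%:M + (ze a ^+ k - 1) *: (unitv a *m row a gram).
Proof.
have idem : (unitv a *m row a gram) *m (unitv a *m row a gram)
            = unitv a *m row a gram.
  rewrite mulmxA -[unitv a *m _ *m unitv a]mulmxA -row_mul [row a _]mx11_scalar.
  by rewrite mxE -/(gcoord a _) gcoord_unitv al_diag mul_mx_scalar scale1r.
elim: k => [|k IH]; first by rewrite /= expr0 subrr scale0r addr0.
rewrite iterS IH /reflection; move: (unitv a *m row a gram) idem => E idem.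
rewrite mulmxDl mul1mx !mulmxDr mulmx1 -scalemxAl -!scalemxAr scalerA idem.
by apply/matrixP => x y; rewrite !mxE exprS; ring.
Qed.

Definition comb a b (c1 c2 : R) : 'cV[R]_n := c1 *: unitv a + c2 *: unitv b.

Lemma reflection_comb_l a b c1 c2 :
  reflection a *m comb a b c1 c2
  = comb a b (ze a * c1 + (ze a - 1) * al a b * c2) c2.
Proof.
rewrite reflectionE {2}/comb gcoordD !gcoordZ !gcoord_unitv al_diag.
by rewrite /comb; apply/matrixP => i j; rewrite !mxE; ring.
Qed.

Lemma reflection_comb_r a b c1 c2 :
  reflection b *m comb a b c1 c2
  = comb a b c1 ((ze b - 1) * al a b * c1 + ze b * c2).
Proof.
rewrite reflectionE {2}/comb gcoordD !gcoordZ !gcoord_unitv al_diag.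
by rewrite /comb al_sym; apply/matrixP => i j; rewrite !mxE; ring.
Qed.

(* On span(e_a, e_b), r_a r_b has trace [braid_trace a b] and determinant
   [ze a * ze b]; its powers are therefore governed by a Lucas sequence. *)
Definition braid_trace a b :=
  ze a + ze b + (ze a - 1) * (ze b - 1) * al a b ^+ 2.
Local Notation U a b := (lucasU (braid_trace a b) (ze a * ze b)).

Lemma iter_reflection2 a b s :
  iter s (fun v => reflection a *m (reflection b *m v)) (unitv a)
  = comb a b (U a b s.+1 - ze b * U a b s) ((ze b - 1) * al a b * U a b s).
Proof.
elim: s => [|s IH]; first by rewrite /= !mulr0 subr0 /comb scale0r addr0 scale1r.
rewrite iterS IH reflection_comb_r reflection_comb_l lucasUSS /braid_trace.
by congr comb; ring.
Qed.

Fixpoint altprod a b t : 'M[R]_n :=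
  if t is t'.+1 then reflection a *m altprod b a t' else 1%:M.

Fixpoint altprod_coef a b t : 'cV[R]_n * 'cV[R]_n :=
  if t is t'.+1 then
    let yz := altprod_coef b a t' in (unitv a + reflection a *m yz.2, reflection a *m yz.1)
  else (0, 0).

Lemma altprodE a b t :
  altprod a b t = 1%:M + (ze a - 1) *: ((altprod_coef a b t).1 *m row a gram)
                       + (ze b - 1) *: ((altprod_coef a b t).2 *m row b gram).
Proof.
elim: t a b => [|t IH] a b /=; first by rewrite !mul0mx !scaler0 !addr0.
rewrite IH; move: (altprod_coef b a t).1 (altprod_coef b a t).2 => y z.
rewrite !mulmxDr mulmx1 -!scalemxAr !mulmxA {1}/reflection !mulmxDl !scalerDr.
have addr_perm (V : zmodType) (u0 u1 u2 u3 : V) : u0 + u1 + u2 + u3 = u0 + (u1 + u3) + u2.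
  by rewrite addrA [RHS]addrAC.
exact: addr_perm.
Qed.

Definition refl2_sum a b h :=
  iter h (fun v => unitv a + reflection a *m (reflection b *m v)) 0.

Lemma refl2_sumS a b h :
  refl2_sum a b h.+1 = unitv a + reflection a *m (reflection b *m refl2_sum a b h).
Proof. by []. Qed.

Lemma refl2_sumSr a b h : refl2_sum a b h.+1
  = refl2_sum a b h + iter h (fun v => reflection a *m (reflection b *m v)) (unitv a).
Proof.
elim: h => [|h IH]; first by rewrite /refl2_sum /= !mulmx0 addr0 add0r.
by rewrite refl2_sumS {1}IH !mulmxDr addrA.
Qed.

Lemma altprod_coef_double a b h :
  (altprod_coef a b h.*2).1 = refl2_sum a b h
  /\ (altprod_coef b a h.*2).2 = reflection b *m refl2_sum a b h.
Proof.
elim: h => [|h [IH1 IH2]]; first by rewrite /= mulmx0.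
by rewrite doubleS /= IH1 IH2.
Qed.

Lemma gcoord_refl2_sum a b h :
  gcoord b (refl2_sum a b h) = al a b * U a b h.
Proof.
elim: h => [|h IH]; first by rewrite /refl2_sum /gcoord /= mulmx0 mxE mulr0.
rewrite refl2_sumSr gcoordD IH iter_reflection2 /comb gcoordD !gcoordZ.
rewrite !gcoord_unitv al_diag al_sym.
by move: (U a b h.+1) (U a b h) => u1 u0; ring.
Qed.

Definition braid_cond a b k : Prop :=
  if odd k then U a b k./2.+1 = ze b * U a b k./2
  else al a b * U a b k./2 = 0.

Lemma altprod_coef_swap a b k :
  braid_cond a b k -> (altprod_coef a b k).1 = (altprod_coef b a k).2.
Proof.
rewrite /braid_cond; have := odd_double_half k.
set o := odd k; set h := k./2; clearbody o h.
have [sum_ab refl_sum_ab] := altprod_coef_double a b h.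
case: o; rewrite ?add1n ?add0n => <- cond /=.
  rewrite sum_ab refl_sum_ab -refl2_sumS.
  rewrite refl2_sumSr reflectionE gcoord_refl2_sum iter_reflection2 cond subrr.
  by rewrite /comb scale0r add0r mulrA.
by rewrite sum_ab refl_sum_ab reflectionE gcoord_refl2_sum cond mulr0 scale0r addr0.
Qed.

Lemma altprodC a b k :
  braid_cond a b k -> braid_cond b a k -> altprod a b k = altprod b a k.
Proof.
move=> /altprod_coef_swap cond_ab /altprod_coef_swap cond_ba.
by rewrite !altprodE cond_ab -cond_ba addrAC.
Qed.

End Reflection.

Lemma cV_unitv_sum (R : pzRingType) n (v : 'cV[R]_n) : v = \sum_a v a 0 *: unitv a.
Proof. by rewrite {1}(matrix_sum_delta v); apply: eq_bigr => a _; rewrite big_ord1. Qed.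

Section AverageForm.
Variables (C : numClosedFieldType) (n : nat) (S : seq 'M[C]_n).

Definition avg_form (v w : 'cV[C]_n) : C :=
  \sum_(g <- S) \sum_l ((g *m v) l 0)^* * (g *m w) l 0.

Lemma avg_formDl v1 v2 w : avg_form (v1 + v2) w = avg_form v1 w + avg_form v2 w.
Proof.
rewrite /avg_form -big_split; apply: eq_bigr => g _; rewrite -big_split.
by apply: eq_bigr => l _; rewrite mulmxDr [(_ + _ : 'cV_n) l 0]mxE rmorphD mulrDl.
Qed.

Lemma avg_formDr v w1 w2 : avg_form v (w1 + w2) = avg_form v w1 + avg_form v w2.
Proof.
rewrite /avg_form -big_split; apply: eq_bigr => g _; rewrite -big_split.
by apply: eq_bigr => l _; rewrite mulmxDr [(_ + _ : 'cV_n) l 0]mxE mulrDr.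
Qed.

Lemma avg_formZl c v w : avg_form (c *: v) w = c^* * avg_form v w.
Proof.
rewrite /avg_form mulr_sumr; apply: eq_bigr => g _; rewrite mulr_sumr.
by apply: eq_bigr => l _; rewrite -scalemxAr [(_ *: _ : 'cV_n) l 0]mxE rmorphM mulrA.
Qed.

Lemma avg_formZr c v w : avg_form v (c *: w) = c * avg_form v w.
Proof.
rewrite /avg_form mulr_sumr; apply: eq_bigr => g _; rewrite mulr_sumr.
by apply: eq_bigr => l _; rewrite -scalemxAr [(_ *: _ : 'cV_n) l 0]mxE mulrCA.
Qed.

Lemma avg_formC v w : avg_form w v = (avg_form v w)^*.
Proof.
rewrite /avg_form rmorph_sum; apply: eq_bigr => g _; rewrite rmorph_sum.
by apply: eq_bigr => l _; rewrite rmorphM /= conjCK mulrC.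
Qed.

Lemma avg_form_expand v w : avg_form v w =
  \sum_a \sum_b (v a 0)^* * w b 0 * avg_form (unitv a) (unitv b).
Proof.
have sum_l (F : 'I_n -> 'cV[C]_n) u :
    avg_form (\sum_a F a) u = \sum_a avg_form (F a) u.
  apply: (big_morph (avg_form^~ u)) => [x y|]; first exact: avg_formDl.
  by rewrite -(scale0r 0) avg_formZl conjC0 mul0r.
have sum_r (F : 'I_n -> 'cV[C]_n) u :
    avg_form u (\sum_a F a) = \sum_a avg_form u (F a).
  apply: (big_morph (avg_form u)) => [x y|]; first exact: avg_formDr.
  by rewrite -(scale0r 0) avg_formZr mul0r.
rewrite {1}(cV_unitv_sum v) {1}(cV_unitv_sum w) sum_l; apply: eq_bigr => a _.
rewrite avg_formZl sum_r mulr_sumr; apply: eq_bigr => b _.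
by rewrite avg_formZr mulrA.
Qed.

Lemma avg_form_gt0 v : 1%:M \in S -> v != 0 -> 0 < avg_form v v.
Proof.
move=> S1 v_neq0.
have [l vl_neq0] : exists l, v l 0 != 0.
  apply/existsP; apply: contraR v_neq0 => /existsPn v0.
  by apply/eqP/matrixP => i j; rewrite ord1 mxE; apply/eqP/negbNE/v0.
have sqr_ge0 (x : C) : 0 <= x^* * x by rewrite mulrC mul_conjC_ge0.
rewrite /avg_form (big_rem _ S1) /= ltr_wpDr ?sumr_ge0 // => [g _|].
  exact: sumr_ge0.
by rewrite (bigD1 l) //= ltr_wpDr ?sumr_ge0 // mul1mx mulrC mul_conjC_gt0.
Qed.

Lemma avg_form_mulmx (A B : 'M[C]_n) v w :
  uniq S -> A *m B = 1%:M -> {in S, forall g, g *m A \in S} ->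
  avg_form (A *m v) (A *m w) = avg_form v w.
Proof.
move=> S_uniq AB SA.
have A_inj : injective (fun g : 'M[C]_n => g *m A).
  by move=> g g' gAg'A; rewrite -[g]mulmx1 -[g']mulmx1 -AB !mulmxA gAg'A.
have S_perm : perm_eq S (map (fun g => g *m A) S).
  have SA_uniq : uniq (map (fun g => g *m A) S) by rewrite (map_inj_uniq A_inj).
  have SA_sub : {subset map (fun g => g *m A) S <= S}.
    by move=> _ /mapP[g Sg ->]; apply: SA.
  have [|_ SA_eq] := uniq_min_size SA_uniq SA_sub; first by rewrite size_map.
  by apply: uniq_perm => // x; rewrite SA_eq.
rewrite /avg_form [RHS](perm_big _ S_perm) big_map.
by apply: eq_bigr => g _; rewrite !mulmxA.
Qed.

End AverageForm.

Section PositiveGram.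
Variables (C : numClosedFieldType) (n : nat) (al : 'I_n -> 'I_n -> C).
Variables (ze : 'I_n -> C) (S : seq 'M[C]_n).
Hypothesis al_diag : forall a, al a a = 1.
Hypothesis al_sym : forall a b, al a b = al b a.
Hypothesis al_real : forall a b, al a b \is Num.real.
Hypothesis ze_neq1 : forall a, ze a != 1.
Hypothesis ze_unity_root : forall a, exists2 k, (0 < k)%N & ze a ^+ k = 1.
Hypothesis S_uniq : uniq S.
Hypothesis S1 : 1%:M \in S.
Hypothesis S_closed : forall a, {in S, forall g, g *m reflection al ze a \in S}.

Local Notation r := (reflection al ze).
Local Notation K := (avg_form S).

Lemma avg_form_reflection a v w : K (r a *m v) (r a *m w) = K v w.
Proof.
have [k k_gt0 ze_k] := ze_unity_root a.
apply: (@avg_form_mulmx _ _ _ _ (iter k.-1 (mulmx (r a)) 1%:M)) => //.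
by rewrite -iterS prednK // iter_reflection // ze_k subrr scale0r addr0.
Qed.

Lemma avg_form_unitv_gt0 a : 0 < K (unitv a) (unitv a).
Proof.
apply: avg_form_gt0 => //; apply/eqP => /matrixP /(_ a 0).
by rewrite !mxE !eqxx => /eqP; rewrite oner_eq0.
Qed.

Lemma avg_form_unitv a b : K (unitv a) (unitv b) = al a b * K (unitv a) (unitv a).
Proof.
set v := unitv b + (- al a b) *: unitv a.
have rv : r a *m v = v.
  rewrite reflectionE /v gcoordD gcoordZ !gcoord_unitv al_diag mulr1 subrr.
  by rewrite mulr0 scale0r addr0.
have Kv : K (unitv a) v = (ze a)^* * K (unitv a) v.
  by rewrite -{1}(avg_form_reflection a) rv reflection_unitv // avg_formZl.
have : (1 - (ze a)^*) * K (unitv a) v = 0 by rewrite mulrBl mul1r -Kv subrr.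
have ze_conj_neq1 : (ze a)^* != 1.
  by apply: contra (ze_neq1 a) => /eqP ze1; rewrite -[ze a]conjCK ze1 conjC1.
move/eqP; rewrite mulf_eq0 subr_eq0 eq_sym (negbTE ze_conj_neq1) /=.
by rewrite /v avg_formDr avg_formZr mulNr subr_eq0 => /eqP.
Qed.

Lemma avg_form_unitv_sqrt a b : K (unitv a) (unitv b)
  = al a b * (sqrtC (K (unitv a) (unitv a)) * sqrtC (K (unitv b) (unitv b))).
Proof.
have [al0|al_neq0] := eqVneq (al a b) 0; first by rewrite avg_form_unitv al0 !mul0r.
suff Kba : K (unitv b) (unitv b) = K (unitv a) (unitv a).
  by rewrite avg_form_unitv Kba -expr2 sqrtCK.
have := avg_form_unitv b a; rewrite avg_formC avg_form_unitv rmorphM /=.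
rewrite (conj_Creal (al_real a b)) (conj_Creal (gtr0_real (avg_form_unitv_gt0 a))).
rewrite (al_sym b a) => /eqP.
by rewrite eq_sym (inj_eq (mulfI al_neq0)) => /eqP.
Qed.

Lemma gram_form_gt0 (z : 'I_n -> C) :
  (exists a, z a != 0) -> 0 < \sum_a \sum_b (z a)^* * al a b * z b.
Proof.
move=> [a0 za0].
pose d a := sqrtC (K (unitv a) (unitv a)).
have d_gt0 a : 0 < d a by rewrite sqrtC_gt0 avg_form_unitv_gt0.
pose y : 'cV[C]_n := \col_a (z a / d a).
have y_neq0 : y != 0.
  apply/eqP => /matrixP /(_ a0 0); rewrite !mxE => /eqP.
  by rewrite mulf_eq0 invr_eq0 (negbTE za0) gt_eqF.
have := avg_form_gt0 S1 y_neq0; rewrite avg_form_expand.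
congr (0 < _); apply: eq_bigr => a _; apply: eq_bigr => b _.
rewrite avg_form_unitv_sqrt -/(d a) -/(d b) !mxE rmorphM fmorphV /=.
rewrite (conj_Creal (gtr0_real (d_gt0 a))).
by field; rewrite !gt_eqF.
Qed.

End PositiveGram.

Section ShephardRepresentation.
Variables (R : realType) (I : finType) (e : rel I) (p : I -> nat).
Variable m : I -> I -> option nat.
Hypothesis D : ext_coxeter_diagram e p m.
Local Notation alpha := (alpha R e p m).
Local Notation n := #|I|.

Definition ang (i : I) : R := pi / (p i)%:R.

Lemma p_gt0 i : (0 < p i)%N.
Proof. exact: leq_trans (ecd_p D i). Qed.

Lemma ang_gt0 i : 0 < ang i.
Proof. by rewrite divr_gt0 ?pi_gt0 // ltr0n p_gt0. Qed.

Lemma ang_le_pihalf i : ang i <= pi / 2%:R.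
Proof.
have p2 : 2%:R <= (p i)%:R :> R by rewrite ler_nat (ecd_p D).
have := pi_gt0 R => pi_gt0.
by rewrite ler_pdivrMr ?ltr0n ?p_gt0 //; nra.
Qed.

Lemma sin_ang_gt0 i : 0 < sin (ang i).
Proof.
apply: sin_gt0_pi; rewrite ang_gt0 (le_lt_trans (ang_le_pihalf i)) //.
by have := pi_gt0 R; lra.
Qed.

Lemma alpha_sym i j : alpha i j = alpha j i.
Proof.
rewrite /alpha eq_sym (ecd_sym D i j); case: eqP => // _.
case Eji: (e j i) => //; rewrite (ecd_msym D Eji) -opprB cosN.
by rewrite [2%:R * sin (pi / (p j)%:R) * _]mulrAC.
Qed.

(* For odd m_ij the angles agree; for even m_ij >= 4 both cosines are
   taken at angles in [0, pi/2]. *)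
Lemma cos_edge_ge0 i j k : e i j -> m i j = Some k ->
  0 <= cos (ang i - ang j) + cos (2%:R * pi / k%:R).
Proof.
move=> Eij mij; have k3 := ecd_mge3 D Eij mij.
have [k_odd|k_even] := boolP (odd k).
  rewrite /ang (ecd_odd D Eij mij k_odd) subrr cos0.
  by have := cos_geN1 (2%:R * pi / k%:R : R); lra.
have k4 : (4 <= k)%N by case: k k3 k_even {mij} => [|[|[|[|]]]].
have k4R : 4%:R <= k%:R :> R by rewrite ler_nat.
have := pi_gt0 R => pi_gt0.
have ai := ang_gt0 i; have aj := ang_gt0 j.
have bi := ang_le_pihalf i; have bj := ang_le_pihalf j.
apply: addr_ge0; apply: cos_ge0_pihalf; first lra.
have k_gt0 : 0 < k%:R :> R by apply: lt_le_trans k4R; rewrite ltr0n.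
have : 0 <= 2%:R * pi / k%:R :> R by rewrite divr_ge0 ?mulr_ge0 // ltW.
have : 2%:R * pi / k%:R <= pi / 2%:R :> R.
  by rewrite ler_pdivrMr // mulrAC ler_pdivlMr ?ltr0n //; nra.
lra.
Qed.

Lemma alpha_sqr_edge i j k : i != j -> e i j -> m i j = Some k ->
  alpha i j ^+ 2 * (2%:R * sin (ang i) * sin (ang j))
  = cos (ang i - ang j) + cos (2%:R * pi / k%:R).
Proof.
move=> ij Eij mij.
have den_gt0 : 0 < 2%:R * sin (ang i) * sin (ang j) :> R.
  by rewrite !mulr_gt0 ?ltr0n ?sin_ang_gt0.
rewrite /alpha (negbTE ij) Eij mij /= sqrrN sqr_sqrtr.
  by rewrite divfK // gt_eqF.
by rewrite divr_ge0 ?(ltW den_gt0) // (cos_edge_ge0 Eij mij).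
Qed.

Definition zeta (i : I) : R[i] := expi (ang i) ^+ 2.
Definition alpha_ord (a b : 'I_n) : R[i] := (alpha (enum_val a) (enum_val b))%:C.
Definition zeta_ord (a : 'I_n) : R[i] := zeta (enum_val a).

Lemma zeta_order i : zeta i ^+ p i = 1.
Proof.
rewrite /zeta -exprM expiMn -(expi_2pi R) /ang; congr expi.
have p_neq0 : (p i)%:R != 0 :> R by rewrite pnatr_eq0 -lt0n p_gt0.
by rewrite -(mulr_natr (pi / _)) -(mulr_natr pi) natrM; field.
Qed.

Lemma alpha_ord_diag a : alpha_ord a a = 1.
Proof. by rewrite /alpha_ord /alpha eqxx. Qed.

Lemma alpha_ord_sym a b : alpha_ord a b = alpha_ord b a.
Proof. by rewrite /alpha_ord alpha_sym. Qed.

Lemma alpha_ord_real a b : alpha_ord a b \is Num.real.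
Proof. by rewrite complex_real. Qed.

Lemma zeta_ord_neq1 a : zeta_ord a != 1.
Proof. exact/expi_sqr_neq1/sin_ang_gt0. Qed.

Lemma zeta_ord_unity_root a : exists2 k, (0 < k)%N & zeta_ord a ^+ k = 1.
Proof. by exists (p (enum_val a)); rewrite ?p_gt0 ?zeta_order. Qed.

Local Notation r := (reflection alpha_ord zeta_ord).

Lemma shephard_braid_cond i j k : i != j -> mlab e m i j = Some k ->
  braid_cond alpha_ord zeta_ord (enum_rank i) (enum_rank j) k.
Proof.
move=> ij; rewrite /mlab /braid_cond; case: ifP => [Eij mij|nEij [<-]]; last first.
  by rewrite /= /alpha_ord !enum_rankK /alpha (negbTE ij) nEij rmorph0 mul0r.
have k3 := ecd_mge3 D Eij mij.
set w := expi (ang i) * expi (ang j).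
have w_neq0 : w != 0 by rewrite mulf_neq0 ?expi_neq0.
set t := - (2%:R * cos (2%:R * pi / k%:R)) : R.
have -> : braid_trace alpha_ord zeta_ord (enum_rank i) (enum_rank j) = w * t%:C.
  rewrite /braid_trace /alpha_ord /zeta_ord !enum_rankK.
  exact: expi_braid_trace (alpha_sqr_edge ij Eij mij).
have -> : zeta_ord (enum_rank i) * zeta_ord (enum_rank j) = w ^+ 2.
  by rewrite /zeta_ord /zeta !enum_rankK exprMn.
have Uw s : lucasU (w * t%:C) (w ^+ 2) s * w = w ^+ s * (lucasU t 1 s)%:C.
  by rewrite lucasU_scale rmorph_lucasU rmorph1.
move: (lucasU_cos_2pi_div R k3); rewrite -/t.
case k_odd: (odd k) => Ut; apply: (mulIf w_neq0); last first.
  by rewrite -mulrA Uw Ut rmorph0 !mulr0 mul0r.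
have -> : zeta_ord (enum_rank j) = w.
  by rewrite /zeta_ord /zeta enum_rankK /w /ang (ecd_odd D Eij mij k_odd) expr2.
by rewrite -[RHS]mulrA !Uw Ut exprS mulrA.
Qed.

Definition letter_mx (l : letter I) : 'M[R[i]]_n :=
  if l.2 then r (enum_rank l.1) else iter (p l.1).-1 (mulmx (r (enum_rank l.1))) 1%:M.

Definition word_mx (w : word I) : 'M[R[i]]_n :=
  foldr (fun l M => letter_mx l *m M) 1%:M w.

Lemma word_mx_cat w1 w2 : word_mx (w1 ++ w2) = word_mx w1 *m word_mx w2.
Proof. by elim: w1 => [|l w IH] /=; rewrite ?mul1mx // IH mulmxA. Qed.

Lemma word_mx_rcons w i : word_mx (rcons w (i, true)) = word_mx w *m r (enum_rank i).
Proof. by rewrite -cats1 word_mx_cat /= /letter_mx /= mulmx1. Qed.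

Lemma iter_reflection_order i : iter (p i) (mulmx (r (enum_rank i))) 1%:M = 1%:M.
Proof.
rewrite iter_reflection; last exact: alpha_ord_diag.
by rewrite /zeta_ord enum_rankK zeta_order subrr scale0r addr0.
Qed.

Lemma prodwS (i j : I) k : prodw i j k.+1 = (i, true) :: prodw j i k.
Proof.
rewrite /prodw /mkseq /= -[1%N]/(1 + 0)%N iotaDl -map_comp; congr (_ :: _).
by apply: eq_map => s /=; case: (odd s).
Qed.

Lemma word_mx_prodw (i j : I) k :
  word_mx (prodw i j k) = altprod alpha_ord zeta_ord (enum_rank i) (enum_rank j) k.
Proof. by elim: k i j => [|k IH] i j //; rewrite prodwS /= IH. Qed.

Lemma mlab_sym (i j : I) : mlab e m i j = mlab e m j i.
Proof.
rewrite /mlab (ecd_sym D i j); case Eji: (e j i) => //.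
by rewrite (ecd_msym D Eji).
Qed.

Lemma word_mx_basic w1 w2 : shep_basic e p m w1 w2 -> word_mx w1 = word_mx w2.
Proof.
case=> [i b|i|i j k ij mij].
- have p_pred : (p i).-1.+1 = p i := prednK (p_gt0 i).
  case: b; rewrite /word_mx /letter_mx /= mulmx1.
    by rewrite -iterS p_pred iter_reflection_order.
  by rewrite iter_mulmx_comm -iterS p_pred iter_reflection_order.
- transitivity (iter (p i) (mulmx (r (enum_rank i))) 1%:M).
    by elim: (p i) => //= k ->.
  exact: iter_reflection_order.
- rewrite !word_mx_prodw; apply: altprodC.
  + exact: alpha_ord_diag.
  + exact: alpha_ord_sym.
  + exact: shephard_braid_cond.
  + by apply: shephard_braid_cond; rewrite 1?eq_sym // mlab_sym.
Qed.

Lemma word_mx_shep_eq w1 w2 : shep_eq e p m w1 w2 -> word_mx w1 = word_mx w2.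
Proof.
elim=> [//|u1 u2 _ ->|u1 u2 u3 _ -> _ ->|u v x y /word_mx_basic xy] //.
by rewrite !word_mx_cat xy.
Qed.

Lemma herm_form_enum (z : I -> R[i]) : herm_form e p m z
  = \sum_a \sum_b (z (enum_val a))^* * alpha_ord a b * z (enum_val b).
Proof.
rewrite /herm_form (reindex _ (onW_bij _ (@enum_val_bij I))).
apply: eq_bigr => a _; rewrite (reindex _ (onW_bij _ (@enum_val_bij I))).
by apply: eq_bigr.
Qed.

End ShephardRepresentation.

Theorem proposition2p2 (R : realType) (I : finType) (e : rel I)
    (p : I -> nat) (m : I -> I -> option nat) :
  ext_coxeter_diagram e p m ->
  shephard_finite e p m ->
  herm_pos_def R e p m.
Proof.
move=> D [ws ws_cover] z [i zi].
pose S := undup (map (word_mx R e p m) ws).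
have S_word w : word_mx R e p m w \in S.
  by have [w' w'_ws /(word_mx_shep_eq R D) ->] := ws_cover w; rewrite mem_undup map_f.
rewrite herm_form_enum; apply: (@gram_form_gt0 _ _ _ _ S).
- exact: alpha_ord_diag.
- exact: alpha_ord_sym D.
- exact: alpha_ord_real.
- exact: zeta_ord_neq1 D.
- exact: zeta_ord_unity_root D.
- exact: undup_uniq.
- exact: S_word [::].
- move=> a g; rewrite mem_undup => /mapP[w _ ->].
  by rewrite -(enum_valK a) -word_mx_rcons.
- by exists (enum_rank i); rewrite enum_rankK.
Qed.
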